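(* Let $\mathcal G$ be a good pseudogroup on a compact metric space $X$, let $\mathcal G_1$ be a good generating set of $\mathcal G$ and $\mathcal G_2$ the corresponding compacted generating set. Then there exists $\rho>0$ such that every Borel probability measure $\mu$ on $X$ that is $(\mathcal G,\mathcal G_2)$-weakly expansive with constant $\rho$ (i.e. $\mu(\Phi^2_\rho(x))=0$ for $\mu$-a.e. $x\in X$) is $(\mathcal G,\mathcal G_1)$-expansive with constant $\rho/2$ (i.e. $\mu(\Phi^1_{\rho/2}(x))=0$ for every $x\in X$).
   Context: $(X,d)$ is a compact metric space. $\mathrm{Homeo}(X)$ is the set of homeomorphisms $g:D_g\to R_g$ between open subsets of $X$; compositions are taken on their natural domains, $D_{h\circ g}=g^{-1}(D_h)$ (possibly empty). A pseudogroup is a set $\mathcal G\subset\mathrm{Homeo}(X)$ containing $\mathrm{id}_X$, closed under composition, inversion and restriction to open subsets of the domain, and such that if $g\in\mathrm{Homeo}(X)$ and $D_g$ has an open cover $\mathcal U$ with $g|_U\in\mathcal G$ for all $U\in\mathcal U$, then $g\in\mathcal G$. For $\Gamma\subset\mathrm{Homeo}(X)$ with $\bigcup_{g\in\Gamma}(D_g\cup R_g)=X$, the pseudogroup generated by $\Gamma$ consists of all $g\in\mathrm{Homeo}(X)$ such that each $x\in D_g$ has a neighborhood $U_x\subset D_g$ with $g|_{U_x}=g_1^{e_1}\circ\cdots\circ g_k^{e_k}|_{U_x}$ for some $g_i\in\Gamma$, $e_i\in\{\pm1\}$; $\Gamma$ generates $\mathcal G$ if this pseudogroup equals $\mathcal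 G$. $\Gamma$ is symmetric if $\mathrm{id}_X\in\Gamma$ and $g^{-1}\in\Gamma$ for all $g\in\Gamma$. A finite symmetric generating set $\mathcal G_1$ of $\mathcal G$ is good if for each $g\in\mathcal G_1$ there is a compact $K_g\subset D_g$ such that $\mathcal G_2=\{g|_{\mathrm{int}(K_g)}: g\in\mathcal G_1\}$ still generates $\mathcal G$; $\mathcal G_2$ is called the compacted generating set, and $\mathcal G$ is good if it has a good generating set. For $i=1,2$ let $\mathcal G^i_n=\{h_1\circ\cdots\circ h_n: h_j\in\mathcal G_i\}$, $\mathcal G^{i,x}_n=\{g\in\mathcal G^i_n: x\in D_g\}$ and $\Phi^i_\delta(x)=\{y\in X: d(g(x),g(y))\le\delta\ \text{for all } n\in\mathbb N \text{ and all } g\in\mathcal G^{i,x}_n\cap\mathcal G^{i,y}_n\}$ (Bowen ball). *)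

From HB Require Import structures.
From mathcomp Require Import all_boot all_order all_algebra.
From mathcomp Require Import all_classical all_reals all_analysis.
From Stdlib Require List.
Set Implicit Arguments. Unset Strict Implicit. Unset Printing Implicit Defensive.
Import Order.TTheory GRing.Theory Num.Theory.
Local Open Scope classical_set_scope.
Local Open Scope ring_scope.

(* Partial maps X -> X: g x = None iff x is outside the domain D_g.
   This representation is canonical (no junk values outside the domain). *)
Definition pmapX (X : Type) := X -> option X.

Section Defs.
Context {R : realType} {X : Type} (d : X -> X -> R).

Definition is_metric : Prop :=
  (forall x y, 0 <= d x y) /\ (forall x y, d x y = 0 <-> x = y) /\
  (forall x y, d x y = d y x) /\ (forall x y z, d x z <= d x y + d y z).

Definition dball (x : X) (e : R) : set X := [set y | d x y < e].
Definition dopen (U : set X) : Prop :=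
  forall x, U x -> exists e : R, 0 < e /\ dball x e `<=` U.
Definition dinterior (K : set X) : set X :=
  [set x | exists U, dopen U /\ U x /\ U `<=` K].
Definition dcompact (K : set X) : Prop :=
  forall (I : Type) (F : I -> set X), (forall i, dopen (F i)) ->
    K `<=` \bigcup_(i in setT) F i ->
    exists J : set I, finite_set J /\ K `<=` \bigcup_(i in J) F i.

Definition pdom (g : pmapX X) : set X := [set x | g x <> None].
Definition pran (g : pmapX X) : set X := [set y | exists x, g x = Some y].

Definition pcomp (h g : pmapX X) : pmapX X :=
  fun x => match g x with Some y => h y | None => None end.
Definition pid : pmapX X := fun x => Some x.
Definition prestr (g : pmapX X) (U : set X) : pmapX X :=
  fun x => if `[< U x >] then g x else None.
(* inverse partial map (defined using choice; unique for injective g) *)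
Definition pinv (g : pmapX X) : pmapX X :=
  fun y => match pselect (exists x, g x = Some y) with
           | left H => Some (projT1 (cid H))
           | right _ => None
           end.

Definition pcont (g : pmapX X) : Prop :=
  forall x y, g x = Some y -> forall e : R, 0 < e ->
    exists2 del : R, 0 < del &
      forall x2 y2, d x x2 < del -> g x2 = Some y2 -> d y y2 < e.

Definition is_homeo (g : pmapX X) : Prop :=
  [/\ dopen (pdom g), dopen (pran g),
      (forall x1 x2 y, g x1 = Some y -> g x2 = Some y -> x1 = x2),
      pcont g & pcont (pinv g)].

Definition pseudogroup (G : set (pmapX X)) : Prop :=
  [/\ G `<=` is_homeo, G pid,
      (forall g h, G g -> G h -> G (pcomp h g)) /\
      (forall g, G g -> G (pinv g)),
      (forall g U, G g -> dopen U -> U `<=` pdom g -> G (prestr g U)) &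
      (forall g, is_homeo g -> forall UU : set (set X),
          (forall U, UU U -> dopen U) -> pdom g = \bigcup_(U in UU) U ->
          (forall U, UU U -> G (prestr g U)) -> G g)].

(* evaluation of a word g_1^{e_1} o ... o g_k^{e_k}; e_i = true means +1 *)
Definition peval (w : seq (pmapX X * bool)) : pmapX X :=
  foldr (fun p acc => pcomp (if p.2 then p.1 else pinv p.1) acc) pid w.

Definition generated (Gam : set (pmapX X)) : set (pmapX X) :=
  [set g | is_homeo g /\ forall x, pdom g x ->
     exists (U : set X) (w : seq (pmapX X * bool)),
       [/\ dopen U, U x, U `<=` pdom g, w <> [::] &
           List.Forall (fun p => Gam p.1) w /\
           forall y, U y -> g y = peval w y]].

Definition generates (Gam G : set (pmapX X)) : Prop :=
  [/\ Gam `<=` is_homeo,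
      (forall x, exists2 g, Gam g & pdom g x \/ pran g x) &
      generated Gam = G].

Definition symmetric (Gam : set (pmapX X)) : Prop :=
  Gam pid /\ forall g, Gam g -> Gam (pinv g).

Definition compacted (G1 : set (pmapX X)) (K : pmapX X -> set X) : set (pmapX X) :=
  [set prestr g (dinterior (K g)) | g in G1].

Definition good_gen (G G1 : set (pmapX X)) (K : pmapX X -> set X) : Prop :=
  [/\ finite_set G1, symmetric G1, generates G1 G,
      (forall g, G1 g -> dcompact (K g) /\ K g `<=` pdom g) &
      generates (compacted G1 K) G].

Definition pwords (Gam : set (pmapX X)) (n : nat) : set (pmapX X) :=
  [set g | exists hs : seq (pmapX X),
     [/\ size hs = n, List.Forall Gam hs & g = foldr pcomp pid hs]].

Definition bowen (Gam : set (pmapX X)) (del : R) (x : X) : set X :=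
  [set y | forall n : nat, (0 < n)%N -> forall g, pwords Gam n g ->
     pdom g x -> pdom g y -> forall gx gy, g x = Some gx -> g y = Some gy ->
     d gx gy <= del].

End Defs.

From Pilot Require Import Defs.
From HB Require Import structures.
From mathcomp Require Import all_boot all_order all_algebra.
From mathcomp Require Import all_classical all_reals all_analysis.
From mathcomp Require Import lra.
Import Order.TTheory GRing.Theory Num.Theory.
Local Open Scope classical_set_scope.
Local Open Scope ring_scope.

(* Compactness of the sets K_g and finiteness of G_1 give r > 0 such that the
   closed r-neighbourhood of every K_g lies in the domain of g; take rho = r.
   Let y, z lie in the Bowen ball Phi^1_{r/2}(x).  A G_2-word defined at y
   agrees there with the corresponding G_1-word, whose partial orbit of y
   runs through the sets K_g; the orbit of x stays within r/2 of it, hence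
   inside the domains, so the word is defined at x too.  The triangle
   inequality through the orbit of x then puts z in Phi^2_r(y).  So
   Phi^1_{r/2}(x) is contained in Phi^2_r(y) for each of its points y; it is
   null if it contains a point outside the exceptional null set, and lies
   inside that null set otherwise.  Bowen balls are closed, hence Borel. *)

Lemma finite_uniform_pos (R : realDomainType) (I : Type) (J : set I)
    (P : I -> R -> Prop) :
  finite_set J ->
  (forall i e e', 0 < e' -> e' <= e -> P i e -> P i e') ->
  (forall i, J i -> exists2 e, 0 < e & P i e) ->
  exists2 e, 0 < e & forall i, J i -> P i e.
Proof.
move=> fJ Pdown HP.
have /choice[e He] : forall i, exists e : R, 0 < e /\ (J i -> P i e).
  move=> i; have [Ji|nJi] := pselect (J i); last by exists 1.
  by have [e e0 Pe] := HP i Ji; exists e.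
have /finite_seqP[s Es] := finite_image e fJ.
have in_s t : t \in s <-> (e @` J) t by rewrite Es.
pose m := \big[Order.min/1]_(t <- s) t.
have m0 : 0 < m.
  rewrite /m big_seq; elim/big_ind: _ => // [a b a0 b0|t].
    by rewrite lt_min a0 b0.
  by move=> /in_s[i _ <-]; case: (He i).
exists m => // i Ji; have [e0 /(_ Ji) Pe] := He i.
apply: Pdown Pe => //; apply: ge_bigmin_seq => //.
by apply/in_s; exists i.
Qed.

Local Notation pword hs := (foldr Defs.pcomp pid hs).

Lemma pdomP {X : Type} (g : pmapX X) x : pdom g x <-> exists y, g x = Some y.
Proof.
rewrite /pdom /=; case: (g x) => [y|]; last by split=> [/(_ erefl)|[]].
by split=> // _; exists y.
Qed.
Arguments pdomP {X g x}.

Lemma pdom_Some {X : Type} (g : pmapX X) x y : g x = Some y -> pdom g x.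
Proof. by move=> gx; rewrite /pdom /= gx. Qed.
Arguments pdom_Some {X g x y}.

Section MetricSpace.
Variables (R : realType) (X : Type) (d : X -> X -> R).
Hypothesis d_metric : is_metric d.

Lemma dist_refl x : d x x = 0.
Proof. by have [_ [d_eq0 _]] := d_metric; apply/d_eq0. Qed.

Lemma dist_sym x y : d x y = d y x.
Proof. by have [_ [_ []]] := d_metric. Qed.

Lemma dist_triangle x y z : d x z <= d x y + d y z.
Proof. by have [_ [_ [_]]] := d_metric. Qed.

Lemma dopen_dball x e : dopen d (dball d x e).
Proof.
move=> y xy; exists (e - d x y); split; first by rewrite subr_gt0.
by move=> z yz; rewrite /dball /= in xy yz *; have := dist_triangle x y z; lra.
Qed.

Definition closed_nbhd (K : set X) (r : R) : set X :=
  [set x | exists2 y, K y & d y x <= r].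

Lemma le_closed_nbhd K r r' : r' <= r -> closed_nbhd K r' `<=` closed_nbhd K r.
Proof. by move=> r'r x [y Ky yx]; exists y => //; exact: le_trans r'r. Qed.

Lemma compact_closed_nbhd_sub K D :
  dcompact d K -> dopen d D -> K `<=` D ->
  exists2 r, 0 < r & closed_nbhd K r `<=` D.
Proof.
move=> K_compact D_open KD.
have /choice[e He] : forall y, exists e : R, 0 < e /\ (D y -> dball d y e `<=` D).
  move=> y; have [Dy|nDy] := pselect (D y); last by exists 1.
  by have [e [e0 De]] := D_open y Dy; exists e.
pose half_ball (i : {y | K y}) := dball d (sval i) (e (sval i) / 2).
have [J [J_fin KJ]] : exists J, finite_set J /\ K `<=` \bigcup_(i in J) half_ball i.
  apply: K_compact => [i|y Ky]; first exact: dopen_dball.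
  exists (exist _ y Ky) => //; have [e0 _] := He y.
  by rewrite /half_ball /dball /= dist_refl divr_gt0.
have [r r0 r_le] : exists2 r, 0 < r & forall i, J i -> r <= e (sval i) / 2.
  apply: finite_uniform_pos J_fin _ _ => [i r r' _ r'r ri|i _]; first exact: le_trans ri.
  by exists (e (sval i) / 2) => //; have [e0 _] := He (sval i); rewrite divr_gt0.
exists r => // x [y Ky yx].
have [[i Ki] Ji /= iy] := KJ y Ky; have [_ iD] := He i.
apply: (iD (KD _ Ki)); rewrite /half_ball /dball /= in iy *.
by have /= := r_le _ Ji; have := dist_triangle i y x; lra.
Qed.

Definition open_cont (g : pmapX X) : Prop := dopen d (pdom g) /\ pcont d g.

Lemma open_cont_pid : open_cont pid.
Proof.
split; first by move=> x _; exists 1; split.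
by move=> x _ [<-] e e0; exists e => // x2 _ xx2 [<-].
Qed.

Lemma open_cont_pcomp h g : open_cont h -> open_cont g -> open_cont (Defs.pcomp h g).
Proof.
move=> [h_open h_cont] [g_open g_cont]; split.
  move=> x; rewrite /pdom /Defs.pcomp /=.
  case gx: (g x) => [y|] // hy.
  have [r [r0 hr]] := h_open y hy.
  have [del1 del1_0 gcont1] := g_cont x y gx r r0.
  have [del2 [del2_0 gdom2]] := g_open x (pdom_Some gx).
  exists (Order.min del1 del2); split; first by rewrite lt_min del1_0 del2_0.
  move=> x2; rewrite /dball /= lt_min => /andP[x2_1 x2_2].
  have /pdomP[y2 gx2] := gdom2 x2 x2_2.
  by rewrite /pdom /= gx2; apply: hr; exact: gcont1 gx2.
move=> x z; rewrite /Defs.pcomp; case gx: (g x) => [y|] // hy e e0.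
have [del1 del1_0 hcont1] := h_cont y z hy e e0.
have [del del0 gcont] := g_cont x y gx del1 del1_0.
exists del => // x2 z2 xx2; case gx2: (g x2) => [y2|] // hy2.
exact: hcont1 (gcont x2 y2 xx2 gx2) hy2.
Qed.

Lemma open_cont_word (Gam : set (pmapX X)) hs :
  Gam `<=` is_homeo d -> List.Forall Gam hs -> open_cont (pword hs).
Proof.
move=> Gam_homeo; elim=> [|h {}hs Gam_h _ IH] /=; first exact: open_cont_pid.
by apply: open_cont_pcomp IH; have [? _ _ ? _] := Gam_homeo h Gam_h.
Qed.

Lemma dopen_setC_bowen (Gam : set (pmapX X)) del x :
  Gam `<=` is_homeo d -> dopen d (~` bowen d Gam del x).
Proof.
move=> Gam_homeo y notB.
have [n [n0 [g [wg [gx [gy [xgx ygy lt_del]]]]]]] : exists n, (0 < n)%N /\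
    exists g, pwords Gam n g /\ exists gx gy,
      [/\ g x = Some gx, g y = Some gy & del < d gx gy].
  apply: contrapT => H; apply: notB => n n0 g wg _ _ gx gy xgx ygy.
  by rewrite leNgt; apply/negP => lt_del; apply: H; exists n; split => //;
    exists g; split => //; exists gx, gy.
have [g_open g_cont] : open_cont g.
  by case: wg => hs [_ Gam_hs ->]; exact: open_cont_word Gam_hs.
have gap0 : 0 < d gx gy - del by rewrite subr_gt0.
have [del1 del1_0 gcont1] := g_cont y gy ygy _ gap0.
have [del2 [del2_0 gdom2]] := g_open y (pdom_Some ygy).
exists (Order.min del1 del2); split; first by rewrite lt_min del1_0 del2_0.
move=> z; rewrite /dball /= lt_min => /andP[yz1 yz2] Bz.
have zdom : pdom g z by exact: gdom2.
have /pdomP[gz zgz] := zdom.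
have := Bz n n0 g wg (pdom_Some xgx) zdom gx gz xgx zgz.
have := gcont1 z gz yz1 zgz; have := dist_triangle gx gz gy.
by rewrite (dist_sym gz gy); lra.
Qed.

(* The Bowen ball only constrains words of positive length; padding with
   [pid] covers the empty word as well. *)
Lemma bowen_word {Gam : set (pmapX X)} {del x y hs a b} :
  Gam pid -> bowen d Gam del x y -> List.Forall Gam hs ->
  pword hs x = Some a -> pword hs y = Some b -> d a b <= del.
Proof.
move=> Gam_pid Bxy Gam_hs xa yb.
have xa' : pword (pid :: hs) x = Some a by rewrite /= /Defs.pcomp xa.
have yb' : pword (pid :: hs) y = Some b by rewrite /= /Defs.pcomp yb.
apply: (Bxy (size hs).+1 erefl _ _ (pdom_Some xa') (pdom_Some yb') a b xa' yb').
by exists (pid :: hs); split => //; constructor.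
Qed.

Section CompactedWords.
Variables (G1 : set (pmapX X)) (K : pmapX X -> set X) (r : R).
Hypotheses (G1_pid : G1 pid) (r0 : 0 < r).
Hypothesis K_margin : forall g, G1 g -> closed_nbhd (K g) r `<=` pdom g.

Lemma compacted_word_lift hs : List.Forall (compacted d G1 K) hs ->
  exists hs1, [/\ List.Forall G1 hs1, size hs1 = size hs &
    forall x y b, bowen d G1 (r / 2) x y -> pword hs y = Some b ->
      pword hs1 y = Some b /\ pdom (pword hs1) x].
Proof.
elim=> [|_ {}hs [h G1h <-] _ [hs1 [G1_hs1 size_hs1 lift]]].
  by exists [::]; split => // x y b _ ->; split.
exists (h :: hs1); split => /=; [by constructor | by rewrite size_hs1 |].
move=> x y b Bxy; rewrite /Defs.pcomp /prestr.
case y_y': (pword hs y) => [y'|] //; case: asboolP => // int_y' y'b.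
have [y_y1 x_dom] := lift x y y' Bxy y_y'.
have /pdomP[x' x_x'] := x_dom.
split; first by rewrite y_y1.
rewrite /pdom /= x_x'.
have Ky' : K h y' by case: int_y' => U [_ [Uy' UK]]; exact: UK.
apply: K_margin G1h _ _; exists y' => //.
have := bowen_word G1_pid Bxy G1_hs1 x_x' y_y1; have := r0.
by rewrite dist_sym; lra.
Qed.

Lemma bowen_sub_compacted x y : bowen d G1 (r / 2) x y ->
  bowen d G1 (r / 2) x `<=` bowen d (compacted d G1 K) r y.
Proof.
move=> Bxy z Bxz n _ g [hs [_ G2_hs ->]] _ _ b c yb zc.
have [hs1 [G1_hs1 _ lift]] := compacted_word_lift _ G2_hs.
have [yb1 /pdomP[a xa]] := lift x y b Bxy yb.
have [zc1 _] := lift x z c Bxz zc.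
have := bowen_word G1_pid Bxy G1_hs1 xa yb1.
have := bowen_word G1_pid Bxz G1_hs1 xa zc1.
by have := dist_triangle b a c; rewrite (dist_sym b a); lra.
Qed.

End CompactedWords.

End MetricSpace.

Arguments closed_nbhd {R X} d K r.

Lemma measurable_bowen (R : realType) (d0 : measure_display) (X : measurableType d0)
    (d : X -> X -> R) (Gam : set (pmapX X)) del x :
  is_metric d -> @measurable d0 X = <<s dopen d >> -> Gam `<=` is_homeo d ->
  measurable (bowen d Gam del x).
Proof.
move=> d_metric borel Gam_homeo; rewrite -[bowen _ _ _ _]setCK; apply: measurableC.
by rewrite borel; apply: sub_gen_smallest; exact: dopen_setC_bowen.
Qed.

Lemma measure_eq0_ae_cover (R : realType) (d0 : measure_display)
    (T : measurableType d0) (mu : {measure set T -> \bar R}) (A : T -> set T) (B : set T) :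
  (forall y, measurable (A y)) -> measurable B ->
  {ae mu, forall y, mu (A y) = 0%E} -> (forall y, B y -> B `<=` A y) ->
  mu B = 0%E.
Proof.
move=> mA mB [N [mN N0 A0_N]] BA.
apply/eqP; rewrite eq_le measure_ge0 andbT.
have [[y By Ny]|BN] := pselect (exists2 y, B y & ~ N y).
  have Ay0 : mu (A y) = 0%E by apply: contrapT => Ay; exact/Ny/A0_N.
  by rewrite -Ay0 le_measure ?inE //; exact: BA.
rewrite -N0 le_measure ?inE // => z Bz.
by apply: contrapT => Nz; apply: BN; exists z.
Qed.

Theorem theoremA (R : realType) (d0 : measure_display) (X : measurableType d0)
  (dist : X -> X -> R)
  (hmetric : is_metric dist) (hcompact : dcompact dist setT)
  (hborel : @measurable d0 X = <<s dopen dist >>)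
  (G G1 : set (pmapX X)) (K : pmapX X -> set X)
  (hG : pseudogroup dist G) (hG1 : good_gen dist G G1 K) :
  exists rho : R, 0 < rho /\
    forall mu : probability X R,
      {ae mu, forall x, mu (bowen dist (compacted dist G1 K) rho x) = 0%E} ->
      forall x, mu (bowen dist G1 (rho / 2) x) = 0%E.
Proof.
have [G1_fin [G1_pid _] [G1_homeo _ _] K_sub [G2_homeo _ _]] := hG1.
have [r r0 K_margin] :
    exists2 r, 0 < r & forall g, G1 g -> closed_nbhd dist (K g) r `<=` pdom g.
  apply: finite_uniform_pos G1_fin _ _ => [g e e' _ e'e Ke|g G1g].
    by apply: subset_trans Ke; exact: le_closed_nbhd.
  have [K_compact KD] := K_sub g G1g; have [D_open _ _ _ _] := G1_homeo g G1g.
  exact: compact_closed_nbhd_sub.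
exists r; split => // mu ae_null x.
apply: measure_eq0_ae_cover ae_null _ => [y||y].
- exact: measurable_bowen.
- exact: measurable_bowen.
- exact: bowen_sub_compacted.
Qed.
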